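(* Let $G$ be a bipartite graph with bipartition $A\cup B$ and minimum degree $\delta$, such that $|A|\ge |B|$. Then there are sequences of nonempty subsets $A=A_0\supseteq A_1\supseteq\dots\supseteq A_\delta$ and $B=B_0\supseteq B_1\supseteq\dots\supseteq B_\delta$, and pairwise edge-disjoint matchings $M_1,\dots,M_\delta$, such that $|A_i|=|B_i|$ for each $1\le i\le\delta$, and each $M_i$ is a perfect matching of $G[A_i\cup B_i]$. *)

(* finite simple graphs as symmetric irreflexive relations. *)
From mathcomp Require Import all_boot.
Set Implicit Arguments. Unset Strict Implicit. Unset Printing Implicit Defensive.

Section Graphs.
Variable T : finType.
Variable e : rel T.

Definition deg (v : T) : nat := #|[set u | e v u]|.

Definition is_edge (f : {set T}) : bool :=
  [exists x, exists y, e x y && (f == [set x; y])].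

Definition perfect_matching (S : {set T}) (M : {set {set T}}) : Prop :=
  (forall f, f \in M -> is_edge f /\ f \subset S) /\
  (forall v, v \in S -> #|[set f in M | v \in f]| = 1).

End Graphs.

(* Orient the edges from A to B.  Since N(A) is contained in B and |B| <= |A|,
   A has nonempty subsets U with |N(U)| <= |U|.  An inclusion-minimal one, A1,
   satisfies Hall's condition (a deficient proper subset would contradict
   minimality, and so would A1 itself: deleting a vertex keeps it deficient
   unless it is a singleton, and singletons have neighbours).  Hall's theorem
   then matches A1 into N(A1), onto by counting; call the image B1.  All
   neighbours of A1 lie in B1, so deleting the edges of this matching lowers
   the degrees on A1 by at most one, and recursing on (A1, B1) yields the
   remaining delta - 1 matchings, edge-disjoint from the first. *)

From mathcomp Require Import all_boot zify.
Set Implicit Arguments. Unset Strict Implicit. Unset Printing Implicit Defensive.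

Section BipartiteMatchings.
Variable T : finType.
Implicit Types (D : rel T) (A B S U W X Z : {set T}) (f : T -> T).
Implicit Types (As Bs : nat -> {set T}) (fs : nat -> T -> T).

Definition nbh D U : {set T} := \bigcup_(x in U) [set y | D x y].

Definition hall_condition D A := forall U, U \subset A -> #|U| <= #|nbh D U|.

Definition sdr D A f := {in A &, injective f} /\ {in A, forall a, D a (f a)}.

Definition avoid D S : rel T := fun x y => D x y && (y \notin S).

Lemma nbhP D U y : reflect (exists2 x, x \in U & D x y) (y \in nbh D U).
Proof.
apply: (iffP bigcupP) => [[x xU]|[x xU Dxy]]; rewrite ?inE; first by exists x.
by exists x; rewrite ?inE.
Qed.

Lemma mem_nbh D U x y : x \in U -> D x y -> y \in nbh D U.
Proof. by move=> xU Dxy; apply/nbhP; exists x. Qed.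

Lemma nbhS D U W : U \subset W -> nbh D U \subset nbh D W.
Proof.
by move=> sUW; apply/subsetP => y /nbhP[x /(subsetP sUW) xW /(mem_nbh xW)].
Qed.

Lemma nbhU D U W : nbh D (U :|: W) = nbh D U :|: nbh D W.
Proof. exact: bigcup_setU. Qed.

Lemma nbh_avoid D S U : nbh (avoid D S) U = nbh D U :\: S.
Proof.
apply/setP => y; rewrite inE; apply/nbhP/andP => [[x xU /andP[Dxy yS]]|].
  by rewrite yS (mem_nbh xU Dxy).
by case=> yS /nbhP[x xU Dxy]; exists x; rewrite // /avoid Dxy.
Qed.

Lemma hall_conditionS D A U : U \subset A -> hall_condition D A -> hall_condition D U.
Proof. by move=> sUA hallA W sWU; apply/hallA/(subset_trans sWU). Qed.

Lemma sdr_sub D1 D2 A f : subrel D1 D2 -> sdr D1 A f -> sdr D2 A f.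
Proof. by move=> sD [injf Df]; split=> // a /Df/sD. Qed.

Lemma sdr_glue D A U S f g :
    U \subset A -> f @: U \subset S -> sdr D U f -> sdr (avoid D S) (A :\: U) g ->
  sdr D A (fun x => if x \in U then f x else g x).
Proof.
move=> sUA sfUS [injf Df] [injg Dg].
have gS x : x \in A :\: U -> g x \notin S by move/Dg/andP=> [].
have fS x : x \in U -> f x \in S by move=> xU; apply/(subsetP sfUS)/imset_f.
split=> [x y xA yA|x xA]; last first.
  case: ifP => xU; first exact: Df.
  by have /Dg/andP[] : x \in A :\: U by rewrite inE xU.
case: ifP => xU; case: ifP => yU; first exact: injf.
- move=> fxy; have : y \in A :\: U by rewrite inE yU.
  by move/gS; rewrite -fxy fS.
- move=> fxy; have : x \in A :\: U by rewrite inE xU.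
  by move/gS; rewrite fxy fS.
- by apply: injg; rewrite inE ?xU ?yU.
Qed.

Lemma hall_condition_avoid_critical D A U :
    hall_condition D A -> U \subset A -> #|nbh D U| <= #|U| ->
  hall_condition (avoid D (nbh D U)) (A :\: U).
Proof.
move=> hallA sUA critU W; rewrite subsetD nbh_avoid => /andP[sWA dWU].
have hallWU : #|W :|: U| <= #|nbh D W :|: nbh D U|.
  by rewrite -nbhU; apply: hallA; rewrite subUset sWA.
have := cardsUI W U; rewrite disjoint_setI0 // cards0.
have := cardsU (nbh D W) (nbh D U); have := cardsD (nbh D W) (nbh D U).
have := subset_leq_card (subsetIl (nbh D W) (nbh D U)); lia.
Qed.

Lemma hall_condition_avoid_surplus D A a b :
    (forall W, W \subset A -> W != set0 -> W != A -> #|W| < #|nbh D W|) ->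
  a \in A -> hall_condition (avoid D [set b]) (A :\ a).
Proof.
move=> surplus aA W sW; rewrite nbh_avoid.
have [->|W0] := eqVneq W set0; first by rewrite cards0.
have aW : a \notin W by apply/negP => /(subsetP sW); rewrite !inE eqxx.
have WA : W != A by apply: contraNneq aW => ->.
have := surplus W (subset_trans sW (subsetDl _ _)) W0 WA.
rewrite (cardsD1 b (nbh D W)); case: (b \in _) => /=; lia.
Qed.

Lemma sdr_imset_sub D A f : sdr D A f -> f @: A \subset nbh D A.
Proof.
by case=> _ Df; apply/subsetP => _ /imsetP[a aA ->]; apply: mem_nbh aA (Df a aA).
Qed.

(* Halmos-Vaughan: split off a critical set U (|N(U)| = |U|) if there is one;
   otherwise match any edge ab and delete a and b. *)
Lemma hall_marriage D A : hall_condition D A -> exists f, sdr D A f.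
Proof.
elim: {A}_.+1 {-2}A D (ltnSn #|A|) => // n IH A D ltAn hallA.
have [|] := boolP [exists U : {set T},
  [&& U \subset A, U != set0, U != A & #|nbh D U| <= #|U|]].
  case/existsP => U /and4P[sUA U0 UA critU].
  have ltUA : #|U| < #|A| by rewrite proper_card // properEneq UA.
  have ltAU : #|A :\: U| < #|A| by rewrite cardsDS //; move: U0; rewrite -card_gt0; lia.
  have [f sdrf] := IH U D (leq_trans ltUA ltAn) (hall_conditionS sUA hallA).
  have := hall_condition_avoid_critical hallA sUA critU.
  case/(IH _ _ (leq_trans ltAU ltAn)) => g sdrg.
  by eexists; apply: sdr_glue sUA (sdr_imset_sub sdrf) sdrf sdrg.
rewrite negb_exists => /forallP noncrit.
have surplus W : W \subset A -> W != set0 -> W != A -> #|W| < #|nbh D W|.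
  by move=> sWA W0 WA; have := noncrit W; rewrite sWA W0 WA /= -ltnNge.
have [->|[a aA]] := set_0Vmem A; first by exists id; split=> x; rewrite inE.
have [b Dab] : exists b, D a b.
  have := hallA [set a]; rewrite sub1set aA cards1 card_gt0 => /(_ isT)/set0Pn[b].
  by case/nbhP=> _ /set1P-> Dab; exists b.
have ltAa : #|A :\ a| < #|A| by rewrite (cardsD1 a A) aA.
have [g sdrg] := IH _ _ (leq_trans ltAa ltAn) (hall_condition_avoid_surplus b surplus aA).
have sdrb : sdr D [set a] (fun=> b) by split=> [x y /set1P-> /set1P->|x /set1P->].
by eexists; apply: sdr_glue _ sdrb sdrg; rewrite ?sub1set ?imset_set1.
Qed.

Lemma sdr_imset_nbh D A f : sdr D A f -> #|nbh D A| <= #|A| -> f @: A = nbh D A.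
Proof.
move=> sdrf defA; apply/eqP; rewrite eqEcard sdr_imset_sub //.
by rewrite card_in_imset //; case: sdrf.
Qed.

Lemma minimal_deficient_subset D A :
    A != set0 -> #|nbh D A| <= #|A| -> {in A, forall a, exists y, D a y} ->
  exists2 U : {set T},
    [/\ U \subset A, U != set0 & #|nbh D U| <= #|U|] & hall_condition D U.
Proof.
move=> A0 defA nbhA.
pose P (U : {set T}) := [&& U \subset A, U != set0 & #|nbh D U| <= #|U|].
have PA : P A by apply/and3P.
have [U /and3P[sUA U0 defU] minU] := arg_minnP (fun U => #|U|) PA.
exists U => // W sWU; rewrite leqNgt; apply/negP => defW.
have W0 : W != set0 by apply: contraTneq defW => ->; rewrite cards0.
have eWU : W = U.
  apply/eqP; rewrite eqEcard sWU minU //.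
  by rewrite /P (subset_trans sWU sUA) W0 ltnW.
rewrite {W sWU W0}eWU in defW.
have [w wU] := set0Pn _ U0.
have [Uw0|[v vUw]] := set_0Vmem (U :\ w).
  have [y Dwy] := nbhA w (subsetP sUA w wU).
  have : 0 < #|nbh D U|.
    by rewrite card_gt0; apply/set0Pn; exists y; apply: mem_nbh wU Dwy.
  by have := cardsD1 w U; rewrite wU Uw0 cards0; lia.
have PUw : P (U :\ w).
  rewrite /P (subset_trans (subD1set U w) sUA) /=; apply/andP; split.
    by apply/set0Pn; exists v.
  have := subset_leq_card (nbhS D (subD1set U w)); have := cardsD1 w U; rewrite wU; lia.
by have := minU _ PUw; have := cardsD1 w U; rewrite wU; lia.
Qed.

Lemma exists_tight_sdr D A :
    A != set0 -> #|nbh D A| <= #|A| -> {in A, forall a, exists y, D a y} ->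
  exists A1 f1, [/\ A1 \subset A, A1 != set0, sdr D A1 f1 & f1 @: A1 = nbh D A1].
Proof.
move=> A0 defA nbhA.
have [A1 [sA1A A10 defA1] hallA1] := minimal_deficient_subset A0 defA nbhA.
have [f1 sdrf1] := hall_marriage hallA1.
by exists A1, f1; split=> //; apply: sdr_imset_nbh.
Qed.

(* The matching of level i is the injection fs i from As i onto Bs i, so
   edge-disjointness of two levels reads fs i a != fs j a. *)
Definition matching_tower D k A B As Bs fs :=
  [/\ As 0 = A, Bs 0 = B,
      forall i, i < k -> As i.+1 \subset As i /\ Bs i.+1 \subset Bs i,
      forall i, 0 < i <= k -> [/\ As i != set0, sdr D (As i) (fs i) & fs i @: As i = Bs i]
    & forall i j a, 0 < i <= k -> 0 < j <= k -> i != j ->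
        a \in As i -> a \in As j -> fs i a != fs j a].

(* Level 1 is (A1, f1 @: A1, f1); level i.+1 is level i of the tower on A1. *)
Lemma matching_tower_cons D k A B A1 f1 As Bs fs :
    A1 \subset A -> f1 @: A1 \subset B -> A1 != set0 -> sdr D A1 f1 ->
    matching_tower (fun x y => D x y && (y != f1 x)) k A1 (f1 @: A1) As Bs fs ->
  matching_tower D k.+1 A B (fun i => if i is i'.+1 then As i' else A)
    (fun i => if i is i'.+1 then Bs i' else B)
    (fun i => if i is i'.+2 then fs i'.+1 else f1).
Proof.
move=> sA1A sB1B A10 sdrf1 [As0 Bs0 nested levels disj].
have avoid_f1 j a : 0 < j <= k -> a \in As j -> fs j a != f1 a.
  by move=> /levels[_ [_ Df] _] /Df/andP[].
split=> //.
- by case=> [|i] ltik //=; [rewrite As0 Bs0 | apply: nested].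
- case=> [|[|i]] // lei /=; first by rewrite As0 Bs0.
  by have [? sdrf ?] := levels i.+1 lei; split=> //; apply: sdr_sub sdrf => x y /andP[].
- case=> [|[|i]] [|[|j]] a //= lei lej neij.
  + by rewrite As0 => _ /(avoid_f1 j.+1 a lej); rewrite eq_sym.
  + by rewrite As0 => /(avoid_f1 i.+1 a lei).
  + exact: disj.
Qed.

Lemma exists_matching_tower k D A B :
    A != set0 -> nbh D A \subset B -> #|B| <= #|A| ->
    {in A, forall a, k <= #|[set y | D a y]|} ->
  exists As Bs fs, matching_tower D k A B As Bs fs.
Proof.
elim: k D A B => [|k IH] D A B A0 sNB leBA degA.
  by exists (fun=> A), (fun=> B), (fun=> id); split=> // *; exfalso; lia.
have nbhA : {in A, forall a, exists y, D a y}.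
  move=> a /degA/(leq_trans (ltn0Sn k)); rewrite card_gt0 => /set0Pn[y]; rewrite inE.
  by exists y.
have defA : #|nbh D A| <= #|A| := leq_trans (subset_leq_card sNB) leBA.
have [A1 [f1 [sA1A A10 sdrf1 imf1]]] := exists_tight_sdr A0 defA nbhA.
pose D1 x y := D x y && (y != f1 x).
have sN1B1 : nbh D1 A1 \subset f1 @: A1.
  by rewrite imf1; apply/subsetP => y /nbhP[x xA1 /andP[Dxy _]]; apply: mem_nbh xA1 Dxy.
have degA1 : {in A1, forall a, k <= #|[set y | D1 a y]|}.
  move=> a aA1; have -> : [set y | D1 a y] = [set y | D a y] :\ f1 a.
    by apply/setP => y; rewrite !inE andbC.
  have := degA a (subsetP sA1A a aA1).
  by rewrite (cardsD1 (f1 a)); case: (_ \in _) => /=; lia.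
have [As [Bs [fs tower]]] := IH D1 A1 (f1 @: A1) A10 sN1B1 (leq_imset_card _ _) degA1.
have sB1B : f1 @: A1 \subset B by rewrite imf1; apply: subset_trans (nbhS D sA1A) sNB.
by do 3 eexists; apply: matching_tower_cons sA1A sB1B A10 sdrf1 tower.
Qed.

Definition edges_of f X : {set {set T}} := [set [set x; f x] | x in X].

Lemma set2_bipartite_inj X a b c d :
    a \in X -> c \in X -> b \notin X -> d \notin X -> [set a; b] = [set c; d] ->
  a = c /\ b = d.
Proof.
move=> aX cX bX dX eq2.
have /set2P[ac|ad] : a \in [set c; d] by rewrite -eq2 set21.
  subst c; have /set2P[ba|] // : b \in [set a; d] by rewrite -eq2 set22.
  by move: bX; rewrite ba aX.
by move: dX; rewrite -ad aX.
Qed.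

Lemma perfect_matching_edges_of (e : rel T) X f :
    {in X &, injective f} -> {in X, forall x, e x (f x)} ->
    {in X, forall x, f x \notin X} ->
  perfect_matching e (X :|: f @: X) (edges_of f X).
Proof.
move=> injf ef fX.
split=> [_ /imsetP[x xX ->]|v vXY].
  split; first by apply/existsP; exists x; apply/existsP; exists (f x); rewrite ef ?eqxx.
  by apply/subsetP => y /set2P[]->; rewrite inE ?xX ?imset_f ?orbT.
have [w wX vw] : exists2 w, w \in X & v \in [set w; f w].
  case/setUP: vXY => [vX|/imsetP[w wX ->]]; first by exists v; rewrite ?set21.
  by exists w; rewrite ?set22.
suff -> : [set g in edges_of f X | v \in g] = [set [set w; f w]] by rewrite cards1.
apply/setP => g; rewrite !inE; apply/andP/eqP => [[/imsetP[x xX ->] vx]|->]; last first.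
  by rewrite vw (imset_f (fun x => [set x; f x])).
have [vx'|vfx] := set2P vx; have [vw'|vfw] := set2P vw.
- by rewrite -vx' vw'.
- by move: (fX w wX); rewrite -vfw vx' xX.
- by move: (fX x xX); rewrite -vfx vw' wX.
- by rewrite (injf x w) // -vfx.
Qed.

Lemma disjoint_edges_of A X Z f g :
    X \subset A -> Z \subset A -> {in X, forall x, f x \notin A} ->
    {in Z, forall z, g z \notin A} -> (forall a, a \in X -> a \in Z -> f a != g a) ->
  [disjoint edges_of f X & edges_of g Z].
Proof.
move=> sXA sZA fA gA fg; rewrite -setI_eq0; apply/eqP/setP => h; rewrite !inE.
apply/andP => -[/imsetP[x xX ->] /imsetP[z zZ]].
case/(set2_bipartite_inj (subsetP sXA x xX) (subsetP sZA z zZ) (fA x xX) (gA z zZ)) => xz.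
by subst z; apply/eqP/fg.
Qed.
Lemma matching_tower_edges (e : rel T) k A B As Bs fs :
    (forall x y, x \in A -> e x y -> y \notin A) ->
    matching_tower (fun x y => e x y && (x \in A)) k A B As Bs fs ->
  (forall i, 0 < i <= k ->
     [/\ As i != set0, Bs i != set0, #|As i| = #|Bs i|
        & perfect_matching e (As i :|: Bs i) (edges_of (fs i) (As i))]) /\
  (forall i j, 0 < i <= k -> 0 < j <= k -> i != j ->
     [disjoint edges_of (fs i) (As i) & edges_of (fs j) (As j)]).
Proof.
move=> eA [_ _ _ levels disj].
have sides i : 0 < i <= k -> As i \subset A /\ {in As i, forall x, fs i x \notin A}.
  case/levels=> _ [_ Df] _; split; first by apply/subsetP => x /Df/andP[].
  by move=> x /Df/andP[exy xA]; apply: eA exy.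
split=> [i lei | i j lei lej neij].
  have [As0 [injf Df] <-] := levels i lei; have [sAA fA] := sides i lei.
  rewrite -!card_gt0 card_in_imset // card_gt0 As0; split=> //.
  apply: perfect_matching_edges_of => // [x /Df/andP[] // | x /fA].
  by apply: contra; apply: subsetP.
have [sAi fAi] := sides i lei; have [sAj fAj] := sides j lej.
by apply: disjoint_edges_of sAi sAj fAi fAj _ => a; apply: disj.
Qed.
End BipartiteMatchings.

Theorem lemma2p2 (T : finType) (e : rel T) (A B : {set T}) (delta : nat) :
  symmetric e -> irreflexive e ->
  [disjoint A & B] -> A :|: B = [set: T] ->
  (forall x y, e x y -> (x \in A) && (y \in B) || (x \in B) && (y \in A)) ->
  (forall v, delta <= deg e v) -> (exists v, deg e v = delta) ->
  #|B| <= #|A| ->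
  exists (As Bs : nat -> {set T}) (M : nat -> {set {set T}}),
    As 0 = A /\ Bs 0 = B /\
    (forall i, i < delta -> As i.+1 \subset As i /\ Bs i.+1 \subset Bs i) /\
    (forall i, 1 <= i <= delta ->
       As i != set0 /\ Bs i != set0 /\ #|As i| = #|Bs i| /\
       perfect_matching e (As i :|: Bs i) (M i)) /\
    (forall i j, 1 <= i <= delta -> 1 <= j <= delta -> i != j ->
       [disjoint M i & M j]).
Proof.
move=> _ _ dAB coverAB bip mindeg [v0 _] leBA.
have eA x y : x \in A -> e x y -> y \notin A.
  move=> xA /bip/orP[/andP[_ yB]|/andP[xB _]]; first by rewrite (disjointFl dAB yB).
  by rewrite (disjointFr dAB xA) in xB.
have A0 : A != set0.
  apply: contraTneq leBA => A0; rewrite A0 cards0 -ltnNge card_gt0.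
  by apply/set0Pn; exists v0; have := in_setT v0; rewrite -coverAB A0 set0U.
pose D x y := e x y && (x \in A).
have sNB : nbh D A \subset B.
  apply/subsetP => y /nbhP[x xA /andP[exy _]].
  by have := in_setT y; rewrite -coverAB inE (negPf (eA x y xA exy)).
have degA : {in A, forall a, delta <= #|[set y | D a y]|}.
  move=> a aA; have -> : [set y | D a y] = [set y | e a y].
    by apply/setP => y; rewrite !inE /D aA andbT.
  exact: mindeg.
have [As [Bs [fs tower]]] := exists_matching_tower A0 sNB leBA degA.
have [levels disj] := matching_tower_edges eA tower.
case: tower => As0 Bs0 nested _ _.
exists As, Bs, (fun i => edges_of (fs i) (As i)); do 4 split=> //.
by move=> i /levels[].
Qed.
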